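(* Suppose that $$\forall\,\varepsilon>0\;\exists\,\delta>0\ \text{such that}\ j(\varphi,\psi)\le\varepsilon\ \ \forall\,(\varphi,\psi)\in U_+\ \text{with}\ \|\varphi\|_0\le\delta .$$ If $q(0)<0$, then for every solution $(w,v)=(w,v)^\phi$, $\phi\in X_+$, of $w'(t)=q(v(t))w(t)$, $v'(t)=j(w_t,v_t)-\mu v(t)$ one has $w(t)\to0$ as $t\to\infty$.
   Context: Let $h>0$, $R_-<0$, $I=(R_-,\infty)$, $q:I\to\mathbb{R}$, $\mu>0$, $U=C^1([-h,0],\mathbb{R})\times C^1([-h,0],I)$, $j:U\to\mathbb{R}$, $U_+=C^1([-h,0],\mathbb{R}_+^2)$, $\|\cdot\|_0$ the sup-norm; $x_t(s)=x(t+s)$. Define $F(\varphi,\psi)=(q(\psi(0))\varphi(0),\,j(\varphi,\psi)-\mu\psi(0))$ and $X_+=\{\phi\in C^1([-h,0],\mathbb{R}_+^2):\phi'(0)=F(\phi)\}\neq\emptyset$. Assume: $j$ is $C^1$ on $U$ with each derivative extending to a linear map on $C([-h,0],\mathbb{R}^2)$ depending continuously on $(\phi,\chi)$; for every bounded $B\subset U_+$ there is $L_B$ with $|j(\phi)-j(\chi)|\le L_B\|\phi-\chi\|_0$ on $B$; $j\ge0$ on $U_+$; $j(B_1\times B_2)$ is bounded whenever $B_1\times B_2\subset U_+$ with $B_1$ bounded; $q$ is bounded and $C^1$; and $q(s)<0$ for all $s>0$. Solutions from $X_+$ exist globally and remain nonnegative. *)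

From Stdlib Require Import Reals Lra.
Open Scope R_scope.

Definition inI (a b x : R) : Prop := a <= x <= b.

(* f is C^1 on the closed interval [a,b] with derivative df:
   df is continuous on [a,b] (relative to [a,b]) and df x is the derivative
   of f at x relative to [a,b] (one-sided at the endpoints). *)
Definition C1_on (a b : R) (f df : R -> R) : Prop :=
  (forall x, inI a b x -> forall eps, 0 < eps -> exists del, 0 < del /\
     forall y, inI a b y -> Rabs (y - x) < del -> Rabs (df y - df x) < eps) /\
  (forall x, inI a b x -> forall eps, 0 < eps -> exists del, 0 < del /\
     forall y, inI a b y -> Rabs (y - x) < del ->
       Rabs (f y - f x - df x * (y - x)) <= eps * Rabs (y - x)).

(* History segment x_t(s) = x(t+s); only its values on [-h,0] are relevant. *)
Definition hist (x : R -> R) (t : R) : R -> R := fun s => x (t + s).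

Definition in_Uplus (h : R) (phi1 phi2 : R -> R) : Prop :=
  (exists d1 d2, C1_on (-h) 0 phi1 d1 /\ C1_on (-h) 0 phi2 d2) /\
  (forall s, inI (-h) 0 s -> 0 <= phi1 s /\ 0 <= phi2 s).

Definition C1_bounded_by (h r : R) (phi1 : R -> R) : Prop :=
  exists d, C1_on (-h) 0 phi1 d /\
    forall s, inI (-h) 0 s -> Rabs (phi1 s) + Rabs (d s) <= r.

Definition in_Xplus (h mu : R) (q : R -> R) (j : (R -> R) -> (R -> R) -> R)
    (phi1 phi2 : R -> R) : Prop :=
  exists d1 d2, C1_on (-h) 0 phi1 d1 /\ C1_on (-h) 0 phi2 d2 /\
    (forall s, inI (-h) 0 s -> 0 <= phi1 s /\ 0 <= phi2 s) /\
    d1 0 = q (phi2 0) * phi1 0 /\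
    d2 0 = j phi1 phi2 - mu * phi2 0.

Definition is_solution (h Rm mu : R) (q : R -> R) (j : (R -> R) -> (R -> R) -> R)
    (phi1 phi2 w v : R -> R) : Prop :=
  (forall s, inI (-h) 0 s -> w s = phi1 s /\ v s = phi2 s) /\
  (forall t, -h <= t -> Rm < v t) /\
  exists dw dv,
    (forall T, 0 <= T -> C1_on (-h) T w dw /\ C1_on (-h) T v dv) /\
    (forall t, 0 <= t ->
       dw t = q (v t) * w t /\
       dv t = j (hist w t) (hist v t) - mu * v t).

From Stdlib Require Import Reals Lra.
Open Scope R_scope.

(* Since q < 0 on [0, oo) and w, v >= 0, w is nonincreasing, so the histories
   of w stay in a C^1-bounded set on which j is bounded by some K.  Then
   v' <= K - mu v keeps v below max (K / mu, v 0); on this compact range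
   q <= -c < 0, so w' <= -c w drives w to 0. *)

Definition continuous_on (a b : R) (f : R -> R) : Prop :=
  forall x, inI a b x -> forall eps, 0 < eps -> exists del, 0 < del /\
     forall y, inI a b y -> Rabs (y - x) < del -> Rabs (f y - f x) < eps.

Lemma C1_on_continuous a b f df : C1_on a b f df -> continuous_on a b f.
Proof.
  intros [_ Hdf] x Hx eps Heps.
  destruct (Hdf x Hx 1 Rlt_0_1) as [del [Hdel Hrem]].
  set (k := Rabs (df x) + 1).
  assert (Hk : 0 < k) by (unfold k; pose proof (Rabs_pos (df x)); lra).
  exists (Rmin del (eps / k)); split.
  - apply Rmin_glb_lt; [lra | apply Rdiv_lt_0_compat; lra].
  - intros y Hy Hyx.
    pose proof (Rmin_l del (eps / k)); pose proof (Rmin_r del (eps / k)).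
    specialize (Hrem y Hy ltac:(lra)).
    assert (Hlin : Rabs (f y - f x) <= k * Rabs (y - x)).
    { replace (f y - f x) with ((f y - f x - df x * (y - x)) + df x * (y - x)) by ring.
      eapply Rle_trans; [apply Rabs_triang|].
      rewrite Rabs_mult; unfold k; lra. }
    assert (k * Rabs (y - x) < k * (eps / k)) by (apply Rmult_lt_compat_l; lra).
    replace (k * (eps / k)) with eps in * by (field; lra).
    lra.
Qed.

Definition clamp (a b x : R) : R := Rmax a (Rmin b x).

Lemma clamp_inI a b x : a <= b -> inI a b (clamp a b x).
Proof. unfold clamp, inI, Rmax, Rmin; repeat destruct Rle_dec; lra. Qed.

Lemma clamp_id a b x : inI a b x -> clamp a b x = x.
Proof. unfold clamp, inI, Rmax, Rmin; repeat destruct Rle_dec; lra. Qed.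

Lemma clamp_lipschitz a b x y : Rabs (clamp a b y - clamp a b x) <= Rabs (y - x).
Proof.
  unfold clamp, Rmax, Rmin; repeat destruct Rle_dec;
    unfold Rabs; repeat destruct Rcase_abs; lra.
Qed.

Lemma continuous_on_bounded a b f : a <= b -> continuous_on a b f ->
  exists B, forall x, inI a b x -> Rabs (f x) <= B.
Proof.
  intros Hab Hf.
  set (g := fun x => Rabs (f (clamp a b x))).
  assert (Hg : forall c, a <= c <= b -> continuity_pt g c).
  { intros c _ eps Heps.
    destruct (Hf _ (clamp_inI a b c Hab) eps Heps) as [del [Hdel Hd]].
    exists del; split; [exact Hdel|]. intros y [_ Hy]; simpl in *; unfold R_dist in *.
    eapply Rle_lt_trans; [apply Rabs_triang_inv2|].
    apply Hd; [now apply clamp_inI|].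
    eapply Rle_lt_trans; [apply clamp_lipschitz | exact Hy]. }
  destruct (continuity_ab_maj g a b Hab Hg) as [xmax [Hmax _]].
  exists (g xmax); intros x Hx.
  rewrite <- (clamp_id a b x Hx); exact (Hmax x Hx).
Qed.

Lemma C1_on_derivable_pt_lim a b f df x : C1_on a b f df -> a < x < b ->
  derivable_pt_lim f x (df x).
Proof.
  intros [_ Hdf] Hx eps Heps.
  destruct (Hdf x ltac:(unfold inI; lra) (eps / 2) ltac:(lra)) as [del [Hdel Hrem]].
  assert (Hpos : 0 < Rmin del (Rmin (x - a) (b - x))) by (repeat apply Rmin_glb_lt; lra).
  exists (mkposreal _ Hpos); intros dx Hdx0 Hdx; simpl in Hdx.
  pose proof (Rmin_l del (Rmin (x - a) (b - x))).
  pose proof (Rmin_r del (Rmin (x - a) (b - x))).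
  pose proof (Rmin_l (x - a) (b - x)); pose proof (Rmin_r (x - a) (b - x)).
  assert (Hy : inI a b (x + dx)) by (unfold inI, Rabs in *; destruct Rcase_abs; lra).
  specialize (Hrem (x + dx) Hy).
  replace (x + dx - x) with dx in Hrem by ring.
  specialize (Hrem ltac:(lra)).
  assert (Hdxpos : 0 < Rabs dx) by (apply Rabs_pos_lt; exact Hdx0).
  replace ((f (x + dx) - f x) / dx - df x) with ((f (x + dx) - f x - df x * dx) / dx)
    by (field; exact Hdx0).
  unfold Rdiv; rewrite Rabs_mult, Rabs_inv.
  apply Rle_lt_trans with (eps / 2); [|lra].
  apply (Rmult_le_reg_r (Rabs dx)); [exact Hdxpos|].
  rewrite Rmult_assoc, Rinv_l by lra. lra.
Qed.

Lemma C1_on_shift a b f df c a' b' : C1_on a b f df -> a <= c + a' -> c + b' <= b ->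
  C1_on a' b' (fun s => f (c + s)) (fun s => df (c + s)).
Proof.
  intros [Hcont Hrem] Ha Hb; split; intros x Hx eps Heps; unfold inI in Hx.
  - destruct (Hcont (c + x) ltac:(unfold inI; lra) eps Heps) as [del [Hdel Hd]].
    exists del; split; [exact Hdel|]; intros y Hy Hyx.
    apply Hd; [unfold inI in *; lra|].
    now replace (c + y - (c + x)) with (y - x) by ring.
  - destruct (Hrem (c + x) ltac:(unfold inI; lra) eps Heps) as [del [Hdel Hd]].
    exists del; split; [exact Hdel|]; intros y Hy Hyx.
    replace (y - x) with (c + y - (c + x)) in * by ring.
    apply Hd; [unfold inI in *; lra | exact Hyx].
Qed.

Lemma continuity_ab_neg_bound (f : R -> R) (a b : R) : a <= b ->
  (forall x, a <= x <= b -> continuity_pt f x) ->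
  (forall x, a <= x <= b -> f x < 0) ->
  exists c, 0 < c /\ forall x, a <= x <= b -> f x <= - c.
Proof.
  intros Hab Hcont Hneg.
  destruct (continuity_ab_maj f a b Hab Hcont) as [xmax [Hmax Hxmax]].
  exists (- f xmax); split; [specialize (Hneg xmax Hxmax); lra|].
  intros x Hx; specialize (Hmax x Hx); lra.
Qed.

Lemma deriv_nonpos_nonincreasing (f df : R -> R) (t1 t2 : R) : t1 <= t2 ->
  (forall t, t1 <= t <= t2 -> derivable_pt_lim f t (df t)) ->
  (forall t, t1 <= t <= t2 -> df t <= 0) ->
  f t2 <= f t1.
Proof.
  intros Ht Hder Hneg.
  destruct (Req_dec t1 t2) as [->|Hne]; [lra|].
  destruct (MVT_cor2 f df t1 t2 ltac:(lra) Hder) as [c [Hmvt Hc]].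
  assert (df c <= 0) by (apply Hneg; lra).
  assert (df c * (t2 - t1) <= 0) by nra.
  lra.
Qed.

Lemma le_Rmax_of_deriv_le_affine (f df : R -> R) (K mu : R) : 0 < mu ->
  (forall t, 0 <= t -> derivable_pt_lim f t (df t)) ->
  (forall t, 0 <= t -> df t <= K - mu * f t) ->
  forall t, 0 <= t -> f t <= Rmax (K / mu) (f 0).
Proof.
  intros Hmu Hder Hdf t Ht.
  pose proof (Rmax_l (K / mu) (f 0)); pose proof (Rmax_r (K / mu) (f 0)).
  destruct (Rle_dec (f t) (K / mu)) as [|Hgt]; [lra|].
  (* Integrating factor: g' = (f' - (K - mu f)) e^(mu s) <= 0. *)
  set (g := fun s => (f s - K / mu) * exp (mu * s)).
  set (dg := fun s => (df s - 0) * exp (mu * s) + (f s - K / mu) * (exp (mu * s) * (mu * 1))).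
  assert (Hg : g t <= g 0).
  { apply (deriv_nonpos_nonincreasing g dg); [exact Ht | |].
    - intros s Hs; unfold g, dg.
      apply (derivable_pt_lim_mult (fun s => f s - K / mu) (fun s => exp (mu * s))).
      + apply (derivable_pt_lim_minus f (fct_cte (K / mu)));
          [apply Hder; lra | apply derivable_pt_lim_const].
      + apply (derivable_pt_lim_comp (mult_real_fct mu id) exp).
        * apply derivable_pt_lim_scal, derivable_pt_lim_id.
        * apply derivable_pt_lim_exp.
    - intros s Hs; unfold dg.
      replace ((df s - 0) * exp (mu * s) + (f s - K / mu) * (exp (mu * s) * (mu * 1)))
        with ((df s - (K - mu * f s)) * exp (mu * s)) by (field; lra).
      specialize (Hdf s ltac:(lra)); pose proof (exp_pos (mu * s)); nra. }
  unfold g in Hg; rewrite Rmult_0_r, exp_0, Rmult_1_r in Hg.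
  pose proof (exp_ineq1_le (mu * t)).
  assert (0 <= mu * t) by (apply Rmult_le_pos; lra).
  assert (f t - K / mu <= (f t - K / mu) * exp (mu * t)) by nra.
  lra.
Qed.

Lemma tends_to_0_of_deriv_le_neg_mul (f df : R -> R) (c : R) : 0 < c ->
  (forall t, 0 <= t -> derivable_pt_lim f t (df t)) ->
  (forall t, 0 <= t -> 0 <= f t) ->
  (forall t, 0 <= t -> df t <= - c * f t) ->
  forall eps, 0 < eps -> exists T, forall t, T <= t -> Rabs (f t) < eps.
Proof.
  intros Hc Hder Hpos Hdf eps Heps.
  assert (Hceps : 0 < c * eps) by (apply Rmult_lt_0_compat; lra).
  exists (f 0 / (c * eps) + 1); intros t Ht.
  assert (HT0 : 0 <= f 0 / (c * eps))
    by (apply Rmult_le_pos; [apply Hpos; lra | left; apply Rinv_0_lt_compat, Hceps]).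
  rewrite Rabs_right by (apply Rle_ge, Hpos; lra).
  apply Rnot_le_lt; intro Hft.
  assert (Hdecr : forall s, 0 <= s <= t -> f t <= f s).
  { intros s Hs; apply (deriv_nonpos_nonincreasing f df); [lra | |].
    - intros u Hu; apply Hder; lra.
    - intros u Hu; specialize (Hdf u ltac:(lra)); specialize (Hpos u ltac:(lra)); nra. }
  (* While f >= eps, the slope is at most - c eps, so f would become negative. *)
  assert (Hlin : f t + c * eps * t <= f 0 + c * eps * 0).
  { apply (deriv_nonpos_nonincreasing (fun s => f s + c * eps * s)
             (fun s => df s + c * eps * 1)); [lra | |].
    - intros s Hs; apply (derivable_pt_lim_plus f (mult_real_fct (c * eps) id));
        [apply Hder; lra | apply derivable_pt_lim_scal, derivable_pt_lim_id].
    - intros s Hs; specialize (Hdf s ltac:(lra)); specialize (Hdecr s Hs); nra. }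
  assert (c * eps * (f 0 / (c * eps)) = f 0) by (field; lra).
  assert (c * eps * t >= c * eps * (f 0 / (c * eps) + 1)) by (apply Rle_ge, Rmult_le_compat_l; lra).
  nra.
Qed.

Section Solution.

Context {h Rm mu : R} {q : R -> R} {j : (R -> R) -> (R -> R) -> R}.
Context {w v dw dv : R -> R}.

Hypothesis h_pos : 0 < h.
Hypothesis w_v_C1 : forall T, 0 <= T -> C1_on (-h) T w dw /\ C1_on (-h) T v dv.
Hypothesis w_v_ode : forall t, 0 <= t ->
  dw t = q (v t) * w t /\ dv t = j (hist w t) (hist v t) - mu * v t.
Hypothesis w_v_nonneg : forall t, -h <= t -> 0 <= w t /\ 0 <= v t.
Hypothesis q_nonpos : forall s, 0 <= s -> q s <= 0.

Lemma w_derivable t : 0 <= t -> derivable_pt_lim w t (dw t).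
Proof.
  intro Ht; apply (C1_on_derivable_pt_lim (-h) (t + 1));
    [apply w_v_C1; lra | lra].
Qed.

Lemma v_derivable t : 0 <= t -> derivable_pt_lim v t (dv t).
Proof.
  intro Ht; apply (C1_on_derivable_pt_lim (-h) (t + 1));
    [apply w_v_C1; lra | lra].
Qed.

Lemma w_nonincreasing t1 t2 : 0 <= t1 <= t2 -> w t2 <= w t1.
Proof.
  intro Ht; apply (deriv_nonpos_nonincreasing w dw); [lra | |].
  - intros t Ht'; apply w_derivable; lra.
  - intros t Ht'; destruct (w_v_ode t ltac:(lra)) as [-> _].
    pose proof (q_nonpos (v t) (proj2 (w_v_nonneg t ltac:(lra)))).
    pose proof (proj1 (w_v_nonneg t ltac:(lra))); nra.
Qed.

Lemma hist_C1_on f df t : 0 <= t -> C1_on (-h) t f df ->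
  C1_on (-h) 0 (hist f t) (hist df t).
Proof. intros Ht Hf; apply (C1_on_shift (-h) t); [exact Hf | lra | lra]. Qed.

Lemma hist_in_Uplus t : 0 <= t -> in_Uplus h (hist w t) (hist v t).
Proof.
  intro Ht; destruct (w_v_C1 t Ht) as [Hw Hv]; split.
  - exists (hist dw t), (hist dv t); split; now apply hist_C1_on.
  - intros s Hs; unfold inI in Hs; apply w_v_nonneg; lra.
Qed.

Lemma w_bounded : exists B, forall t, -h <= t -> Rabs (w t) <= B.
Proof.
  destruct (w_v_C1 0 (Rle_refl 0)) as [Hw _].
  destruct (continuous_on_bounded (-h) 0 w ltac:(lra) (C1_on_continuous _ _ _ _ Hw))
    as [B HB].
  exists B; intros t Ht.
  destruct (Rle_dec t 0); [apply HB; unfold inI; lra|].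
  pose proof (w_nonincreasing 0 t ltac:(lra)).
  pose proof (HB 0 ltac:(unfold inI; lra)).
  destruct (w_v_nonneg t ltac:(lra)); destruct (w_v_nonneg 0 ltac:(lra)).
  rewrite Rabs_right in * by lra; lra.
Qed.

Lemma dw_bounded M : (forall s, Rm < s -> Rabs (q s) <= M) ->
  (forall t, -h <= t -> Rm < v t) ->
  exists D, forall t, -h <= t -> Rabs (dw t) <= D.
Proof.
  intros HM Hvdom.
  destruct w_bounded as [B HB].
  destruct (w_v_C1 0 (Rle_refl 0)) as [Hw _].
  destruct (continuous_on_bounded (-h) 0 dw ltac:(lra) (proj1 Hw)) as [D0 HD0].
  exists (Rmax D0 (M * B)); intros t Ht.
  destruct (Rle_dec t 0).
  - eapply Rle_trans; [apply HD0; unfold inI; lra | apply Rmax_l].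
  - eapply Rle_trans; [|apply Rmax_r].
    destruct (w_v_ode t ltac:(lra)) as [-> _]; rewrite Rabs_mult.
    apply Rmult_le_compat; try apply Rabs_pos; [apply HM, Hvdom | apply HB]; lra.
Qed.

Lemma hist_w_C1_bounded M : (forall s, Rm < s -> Rabs (q s) <= M) ->
  (forall t, -h <= t -> Rm < v t) ->
  exists r, forall t, 0 <= t -> C1_bounded_by h r (hist w t).
Proof.
  intros HM Hvdom.
  destruct w_bounded as [B HB]; destruct (dw_bounded M HM Hvdom) as [D HD].
  exists (B + D); intros t Ht; exists (hist dw t); split.
  - apply hist_C1_on; [exact Ht | apply w_v_C1, Ht].
  - intros s Hs; unfold inI, hist in *.
    pose proof (HB (t + s) ltac:(lra)); pose proof (HD (t + s) ltac:(lra)); lra.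
Qed.

End Solution.

Theorem lemma13
  (h Rm mu : R) (q : R -> R) (j : (R -> R) -> (R -> R) -> R)
  (Hh : 0 < h) (HRm : Rm < 0) (Hmu : 0 < mu)
  (* j is a functional on histories: it only depends on values on [-h,0] *)
  (Hj_loc : forall f1 f2 g1 g2,
     (forall s, inI (-h) 0 s -> f1 s = g1 s /\ f2 s = g2 s) ->
     j f1 f2 = j g1 g2)
  (* q is C^1 on I = (Rm,oo) and bounded there *)
  (Hq_C1 : exists dq, forall s, Rm < s ->
     derivable_pt_lim q s (dq s) /\ continuity_pt dq s)
  (Hq_bdd : exists M, forall s, Rm < s -> Rabs (q s) <= M)
  (Hq_neg : forall s, 0 < s -> q s < 0)
  (* j is Lipschitz (w.r.t. ||.||_0) on bounded subsets of U_+ *)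
  (Hj_lip : forall r, exists L, forall f1 f2 g1 g2,
     in_Uplus h f1 f2 -> in_Uplus h g1 g2 ->
     C1_bounded_by h r f1 -> C1_bounded_by h r f2 ->
     C1_bounded_by h r g1 -> C1_bounded_by h r g2 ->
     forall d, (forall s, inI (-h) 0 s ->
                  Rabs (f1 s - g1 s) <= d /\ Rabs (f2 s - g2 s) <= d) ->
     Rabs (j f1 f2 - j g1 g2) <= L * d)
  (* j >= 0 on U_+ *)
  (Hj_nonneg : forall f1 f2, in_Uplus h f1 f2 -> 0 <= j f1 f2)
  (* j(B1 x B2) bounded whenever B1 x B2 in U_+ with B1 bounded *)
  (Hj_bdd : forall r, exists K, forall f1 f2,
     in_Uplus h f1 f2 -> C1_bounded_by h r f1 -> Rabs (j f1 f2) <= K)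
  (* hypothesis of the lemma *)
  (Hsmall : forall eps, 0 < eps -> exists del, 0 < del /\
     forall f1 f2, in_Uplus h f1 f2 ->
       (forall s, inI (-h) 0 s -> Rabs (f1 s) <= del) ->
       j f1 f2 <= eps)
  (Hq0 : q 0 < 0)
  (phi1 phi2 : R -> R) (Hphi : in_Xplus h mu q j phi1 phi2)
  (w v : R -> R) (Hsol : is_solution h Rm mu q j phi1 phi2 w v)
  (* standing fact: solutions from X_+ remain nonnegative *)
  (Hnonneg : forall t, -h <= t -> 0 <= w t /\ 0 <= v t) :
  forall eps, 0 < eps -> exists T, forall t, T <= t -> Rabs (w t) < eps.
Proof.
  destruct Hsol as [_ [Hvdom [dw [dv [HC1 Hode]]]]].
  destruct Hq_bdd as [M HM]; destruct Hq_C1 as [dq Hdq].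
  assert (q_neg : forall s, 0 <= s -> q s < 0).
  { intros s Hs; destruct (Req_dec s 0) as [->|]; [exact Hq0 | apply Hq_neg; lra]. }
  assert (q_nonpos : forall s, 0 <= s -> q s <= 0) by (intros s Hs; left; auto).
  destruct (hist_w_C1_bounded Hh HC1 Hode Hnonneg q_nonpos M HM Hvdom) as [r Hr].
  destruct (Hj_bdd r) as [K HK].
  set (V := Rmax (K / mu) (v 0)).
  assert (v_le_V : forall t, 0 <= t -> v t <= V).
  { apply (le_Rmax_of_deriv_le_affine v dv K mu Hmu);
      [exact (v_derivable Hh HC1) |].
    intros t Ht; destruct (Hode t Ht) as [_ ->].
    pose proof (HK _ _ (hist_in_Uplus HC1 Hnonneg t Ht) (Hr t Ht)) as Hj.
    pose proof (Rle_abs (j (hist w t) (hist v t))); lra. }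
  destruct (continuity_ab_neg_bound q 0 V) as [c [Hc Hqc]].
  - pose proof (Rmax_r (K / mu) (v 0)); pose proof (Hnonneg 0 ltac:(lra)); unfold V; lra.
  - intros s Hs; apply derivable_continuous_pt; exists (dq s); apply Hdq; lra.
  - intros s Hs; apply q_neg; lra.
  - apply (tends_to_0_of_deriv_le_neg_mul w dw c Hc (w_derivable Hh HC1)).
    + intros t Ht; apply Hnonneg; lra.
    + intros t Ht; destruct (Hode t Ht) as [-> _].
      destruct (Hnonneg t ltac:(lra)) as [Hw Hv].
      pose proof (Hqc (v t) (conj Hv (v_le_V t Ht))); nra.
Qed.
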